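(* Let $V$ be a space. The following are equivalent: (i) $V$ is homothetic to $\langle 1,\tau\rangle_{\mathbb{Q}}$ for some root of unity $\tau$; (ii) $V$ contains a rational triple containing two perpendicular vectors; (iii) $V$ contains a rational $4$-tuple containing two perpendicular vectors.
   Context: A space is a $2$-dimensional $\mathbb{Q}$-vector subspace $V\subset\mathbb{C}$ containing two $\mathbb{R}$-linearly independent vectors; $\langle 1,\tau\rangle_{\mathbb{Q}}=\mathbb{Q}+\mathbb{Q}\tau$. Spaces $V_1,V_2$ are homothetic if $V_2=\lambda V_1$ for some $\lambda\in\mathbb{C}^*$. A rational $n$-tuple in $V$ is a set of $n$ vectors of $V$ spanning $n$ distinct lines through $0$ such that for any two of them $v,w$ the argument of $w/v$ is a rational multiple of $\pi$. *)

From Stdlib Require Import Reals QArith Qreals List.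
From Coquelicot Require Import Coquelicot.
Open Scope R_scope.
Open Scope C_scope.

Definition Qscal (q : Q) (z : C) : C := RtoC (Q2R q) * z.

Definition Qspan (a b : C) : C -> Prop :=
  fun z => exists p q : Q, z = Qscal p a + Qscal q b.

Definition R_indep (x y : C) : Prop :=
  forall a b : R, RtoC a * x + RtoC b * y = 0 -> a = 0%R /\ b = 0%R.

Definition Q_indep (x y : C) : Prop :=
  forall a b : Q, Qscal a x + Qscal b y = 0 -> Q2R a = 0%R /\ Q2R b = 0%R.

Definition is_space (V : C -> Prop) : Prop :=
  V 0 /\
  (forall z w, V z -> V w -> V (z + w)) /\
  (forall (q : Q) z, V z -> V (Qscal q z)) /\
  (exists u w, V u /\ V w /\ Q_indep u w /\
     forall z, V z -> exists p q : Q, z = Qscal p u + Qscal q w) /\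
  (exists x y, V x /\ V y /\ R_indep x y).

Definition homothetic (V1 V2 : C -> Prop) : Prop :=
  exists lam : C, lam <> 0 /\
    forall z, V2 z <-> exists y, V1 y /\ z = lam * y.

Fixpoint Cpow (z : C) (n : nat) : C :=
  match n with O => 1 | S k => z * Cpow z k end.

Definition root_of_unity (t : C) : Prop :=
  exists n : nat, (0 < n)%nat /\ Cpow t n = 1.

Definition same_line (v w : C) : Prop := exists r : R, w = RtoC r * v.

(* the argument of w / v is a rational multiple of pi (arguments are
   defined modulo 2 pi, so this does not depend on the representative) *)
Definition rational_angle (v w : C) : Prop :=
  exists (q : Q) (r : R), 0 < r /\
    w / v = (r * cos (Q2R q * PI), r * sin (Q2R q * PI))%R.

Definition rational_tuple (V : C -> Prop) (n : nat) (l : list C) : Prop :=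
  length l = n /\
  (forall i, (i < n)%nat -> V (nth i l 0) /\ nth i l 0 <> 0) /\
  (forall i j, (i < n)%nat -> (j < n)%nat -> i <> j ->
     ~ same_line (nth i l 0) (nth j l 0) /\
     rational_angle (nth i l 0) (nth j l 0)).

Definition has_perpendicular (l : list C) : Prop :=
  exists i j, (i < length l)%nat /\ (j < length l)%nat /\ i <> j /\
    Re (nth i l 0 * Cconj (nth j l 0)) = 0%R.

(* If V = λ⟨1, τ⟩ with τ = e^{2ih} and h ∈ Qπ (τ is not real, as V contains two
   R-independent vectors), then λ, λτ, λ(1+τ) = 2 cos h · λe^{ih} and
   λ(1-τ) = 2 sin h · λe^{i(h-π/2)} have arguments arg λ + {0, 2h, h, h - π/2}, pairwise
   distinct modulo π, and the last two are perpendicular; dropping λ leaves a triple.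
   Conversely, take perpendicular v, w and a third vector u of a rational tuple, with
   u/v = ρe^{iφ} and φ ∈ Qπ.  As w = itv for a real t ≠ 0, v and w form a Q-basis of V,
   so the reflection λ = v·conj(u/v) of u in the line of v lies in V.  Then
   u = λe^{2iφ}, and e^{2iφ} is a non-real root of unity, so V = λ⟨1, e^{2iφ}⟩. *)

From Pilot Require Import Defs.
From Stdlib Require Import Reals QArith Qreals List Lra Lia.
From Coquelicot Require Import Coquelicot.
Import ListNotations.
Open Scope R_scope.
Open Scope C_scope.

Lemma RtoC_neq_0 (s : R) : s <> 0%R -> RtoC s <> 0.
Proof. intros Hs E. apply Hs. now injection E. Qed.

Definition cis (x : R) : C := (cos x, sin x).

Definition is_Qpi (x : R) : Prop := exists q : Q, x = (Q2R q * PI)%R.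

Lemma is_Qpi_add (x y : R) : is_Qpi x -> is_Qpi y -> is_Qpi (x + y).
Proof. intros [p ->] [q ->]. exists (p + q)%Q. rewrite Q2R_plus. ring. Qed.

Lemma is_Qpi_sub (x y : R) : is_Qpi x -> is_Qpi y -> is_Qpi (x - y).
Proof. intros [p ->] [q ->]. exists (p - q)%Q. rewrite Q2R_minus. ring. Qed.

Lemma is_Qpi_half (x : R) : is_Qpi x -> is_Qpi (x / 2).
Proof.
  intros [q ->]. exists (q * (1 # 2))%Q.
  assert (Hhalf : Q2R (1 # 2) = (/ 2)%R) by (unfold Q2R; simpl; field).
  rewrite Q2R_mult, Hhalf. field.
Qed.

Lemma is_Qpi_0 : is_Qpi 0.
Proof. exists 0%Q. rewrite RMicromega.Q2R_0. ring. Qed.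

Lemma is_Qpi_PI2 : is_Qpi (PI / 2).
Proof. exists (1 # 2)%Q. unfold Q2R. simpl. field. Qed.

Lemma cis_add (x y : R) : cis x * cis y = cis (x + y).
Proof. unfold cis, Cmult. simpl. rewrite cos_plus, sin_plus. f_equal; ring. Qed.

Lemma cis_0 : cis 0 = 1.
Proof. unfold cis. rewrite cos_0, sin_0. reflexivity. Qed.

Lemma cis_neq_0 (x : R) : cis x <> 0.
Proof.
  unfold cis. intro E. injection E as Ec Es.
  pose proof (sin2_cos2 x) as H. rewrite Ec, Es in H. unfold Rsqr in H. lra.
Qed.

Lemma cis_opp (x : R) : cis (- x) = / cis x.
Proof.
  rewrite <- (Cmult_1_r (cis (- x))), <- (Cinv_r (cis x) (cis_neq_0 x)), Cmult_assoc.
  rewrite cis_add, Rplus_opp_l, cis_0. ring.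
Qed.

Lemma Cpow_cis (x : R) (n : nat) : Defs.Cpow (cis x) n = cis (INR n * x).
Proof.
  induction n as [|n IH]; simpl Defs.Cpow.
  - now rewrite Rmult_0_l, cis_0.
  - rewrite IH, cis_add, S_INR. f_equal. ring.
Qed.

Lemma scaled_cis_neq_0 (z : C) (s x : R) : z <> 0 -> s <> 0%R -> z * (RtoC s * cis x) <> 0.
Proof.
  intros Hz Hs. apply Cmult_neq_0; [exact Hz|].
  apply Cmult_neq_0; [exact (RtoC_neq_0 s Hs) | apply cis_neq_0].
Qed.

Lemma root_of_unity_cis (x : R) : is_Qpi x -> root_of_unity (cis x).
Proof.
  intros [q ->]. exists (2 * Pos.to_nat (Qden q))%nat. split; [lia|].
  rewrite Cpow_cis.
  replace (INR (2 * Pos.to_nat (Qden q)) * (Q2R q * PI))%R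
    with (2 * (IZR (Qnum q) * PI))%R.
  - unfold cis. rewrite cos_2a_sin, sin_2a.
    assert (H : sin (IZR (Qnum q) * PI) = 0%R) by (apply sin_eq_0_1; now exists (Qnum q)).
    rewrite H. apply injective_projections; simpl; ring.
  - rewrite mult_INR, (INR_IZR_INZ (Pos.to_nat _)), Znat.positive_nat_Z. unfold Q2R. simpl INR.
    field. apply not_0_IZR. discriminate.
Qed.

Lemma Cpow_eq_Coquelicot_pow (z : C) (n : nat) : Defs.Cpow z n = (z ^ n)%C.
Proof. induction n as [|n IH]; simpl; [reflexivity|]. now rewrite IH. Qed.

Lemma Cmod_root_of_unity (t : C) : root_of_unity t -> Cmod t = 1%R.
Proof.
  intros [n [Hn Ht]].
  rewrite Cpow_eq_Coquelicot_pow in Ht. apply (f_equal Cmod) in Ht.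
  rewrite Cmod_pow, Cmod_1 in Ht.
  destruct (pow_R1 _ _ Ht) as [H | H]; [|lia].
  rewrite Rabs_pos_eq in H; [exact H | apply Cmod_ge_0].
Qed.

Lemma cis_of_Cmod_1 (t : C) : Cmod t = 1%R -> exists x, t = cis x.
Proof.
  destruct t as [a b]. intro Hmod.
  assert (Hab : (a * a + b * b = 1)%R).
  { unfold Cmod in Hmod. cbn [fst snd] in Hmod. rewrite <- sqrt_1 in Hmod.
    apply sqrt_inj in Hmod; nra. }
  assert (Ha : (-1 <= a <= 1)%R) by nra.
  assert (Hsin : sqrt (1 - a²) = Rabs b).
  { rewrite <- sqrt_Rsqr_abs. f_equal. unfold Rsqr. lra. }
  destruct (Rle_or_lt 0 b) as [Hb | Hb].
  - exists (acos a). unfold cis. rewrite cos_acos, sin_acos, Hsin, Rabs_pos_eq; auto.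
  - exists (- acos a)%R. unfold cis.
    rewrite cos_neg, sin_neg, cos_acos, sin_acos, Hsin, Rabs_left; auto.
    f_equal. ring.
Qed.

Lemma root_of_unity_is_cis (t : C) : root_of_unity t -> exists x, is_Qpi x /\ t = cis x.
Proof.
  intros Hroot. destruct (cis_of_Cmod_1 t (Cmod_root_of_unity t Hroot)) as [x ->].
  exists x. split; [|reflexivity].
  destruct Hroot as [n [Hn Hpow]]. rewrite Cpow_cis in Hpow.
  unfold cis in Hpow. injection Hpow as _ Hsin.
  destruct (sin_eq_0_0 _ Hsin) as [k Hk].
  assert (Hden : IZR (Zpos (Pos.of_nat n)) = INR n).
  { rewrite INR_IZR_INZ. f_equal. rewrite <- Znat.positive_nat_Z, Nat2Pos.id by lia. reflexivity. }
  assert (Hn0 : INR n <> 0%R) by (apply not_0_INR; lia).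
  exists (Qmake k (Pos.of_nat n)). unfold Q2R. simpl Qnum. simpl Qden. rewrite Hden.
  apply (Rmult_eq_reg_l (INR n)); [|exact Hn0]. rewrite Hk. field. exact Hn0.
Qed.

Lemma rational_angle_of_ratio (v w : C) (s x : R) :
  s <> 0%R -> is_Qpi x -> w / v = RtoC s * cis x -> rational_angle v w.
Proof.
  intros Hs [q ->] Hratio. unfold rational_angle. rewrite Hratio.
  destruct (Rlt_or_le 0 s) as [Hpos | Hneg].
  - exists q, s. split; [exact Hpos|]. unfold cis, RtoC, Cmult. simpl. f_equal; ring.
  - exists (q + 1)%Q, (- s)%R. split; [lra|].
    rewrite Q2R_plus, RMicromega.Q2R_1, Rmult_plus_distr_r, Rmult_1_l, neg_cos, neg_sin.
    unfold cis, RtoC, Cmult. simpl. f_equal; ring.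
Qed.

Lemma scaled_cis_rational_pair (z : C) (s s' x y : R) :
  z <> 0 -> s <> 0%R -> s' <> 0%R -> is_Qpi x -> is_Qpi y -> sin (y - x) <> 0%R ->
  ~ same_line (z * (RtoC s * cis x)) (z * (RtoC s' * cis y)) /\
  rational_angle (z * (RtoC s * cis x)) (z * (RtoC s' * cis y)).
Proof.
  intros Hz Hs Hs' Hx Hy Hsin.
  assert (Hratio : z * (RtoC s' * cis y) / (z * (RtoC s * cis x)) = RtoC (s' / s) * cis (y - x)).
  { unfold Rminus. rewrite <- cis_add, cis_opp, RtoC_div by exact Hs.
    field. auto using cis_neq_0, RtoC_neq_0. }
  assert (Hratio0 : (s' / s)%R <> 0%R)
    by (unfold Rdiv; apply Rmult_integral_contrapositive; split; auto using Rinv_neq_0_compat).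
  split.
  - intros [r Hr]. apply Hsin. rewrite Hr in Hratio.
    replace (RtoC r * (z * (RtoC s * cis x)) / (z * (RtoC s * cis x))) with (RtoC r) in Hratio
      by (field; auto using cis_neq_0, RtoC_neq_0).
    apply (f_equal Im) in Hratio. unfold cis, RtoC, Cmult in Hratio. simpl in Hratio.
    apply (Rmult_eq_reg_l (s' / s)); [|exact Hratio0]. lra.
  - exact (rational_angle_of_ratio _ _ _ _ Hratio0 (is_Qpi_sub _ _ Hy Hx) Hratio).
Qed.

Lemma ForallOrdPairs_nth {A : Type} (P : A -> A -> Prop) (l : list A) (d : A) :
  (forall a b, P a b -> P b a) -> ForallOrdPairs P l ->
  forall i j, (i < length l)%nat -> (j < length l)%nat -> i <> j ->
  P (nth i l d) (nth j l d).
Proof.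
  intros Psym Hl. induction Hl as [|a l Ha Hl IH]; simpl; intros i j Hi Hj Hij; [lia|].
  rewrite Forall_forall in Ha.
  destruct i as [|i], j as [|j]; [lia | | |].
  - apply Ha, nth_In. lia.
  - apply Psym, Ha, nth_In. lia.
  - apply IH; lia.
Qed.

Lemma rational_tuple_cis (V : C -> Prop) (z : C) (l : list (R * R)) :
  z <> 0 ->
  (forall p, In p l ->
     V (z * (RtoC (fst p) * cis (snd p))) /\ fst p <> 0%R /\ is_Qpi (snd p)) ->
  ForallOrdPairs (fun p p' => sin (snd p' - snd p) <> 0%R) l ->
  rational_tuple V (length l) (map (fun p => z * (RtoC (fst p) * cis (snd p))) l).
Proof.
  intros Hz Hl Hpairs.
  set (f := fun p : R * R => z * (RtoC (fst p) * cis (snd p))).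
  assert (Hnth : forall i, (i < length l)%nat -> nth i (map f l) 0 = f (nth i l (1%R, 0%R))).
  { intros i Hi. rewrite nth_indep with (d' := f (1%R, 0%R)) by (rewrite length_map; exact Hi).
    apply map_nth. }
  split; [apply length_map | split].
  - intros i Hi. rewrite Hnth by exact Hi.
    destruct (Hl _ (nth_In l (1%R, 0%R) Hi)) as [HV [Hs _]].
    split; [exact HV | exact (scaled_cis_neq_0 _ _ _ Hz Hs)].
  - intros i j Hi Hj Hij. rewrite !Hnth by assumption.
    destruct (Hl _ (nth_In l (1%R, 0%R) Hi)) as [_ [Hsi Hxi]].
    destruct (Hl _ (nth_In l (1%R, 0%R) Hj)) as [_ [Hsj Hxj]].
    apply scaled_cis_rational_pair; try assumption.
    apply (ForallOrdPairs_nth (fun p p' => sin (snd p' - snd p) <> 0%R) l); try assumption.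
    intros p p' H E. apply H. rewrite <- Ropp_minus_distr, sin_neg, E. ring.
Qed.

Lemma Re_mul_Cconj_cis (z : C) (s s' x y : R) : cos (x - y) = 0%R ->
  Re (z * (RtoC s * cis x) * Cconj (z * (RtoC s' * cis y))) = 0%R.
Proof.
  intros H. rewrite cos_minus in H. destruct z as [a b].
  unfold Re, Cconj, cis, RtoC, Cmult. simpl.
  transitivity ((a * a + b * b) * s * s' * (cos x * cos y + sin x * sin y))%R; [ring|].
  rewrite H. ring.
Qed.

Lemma perp_imaginary_ratio (v w : C) : v <> 0 -> Re (v * Cconj w) = 0%R ->
  exists t : R, w = v * (0%R, t).
Proof.
  intros Hv Hre. exists (Im (w / v)).
  transitivity (v * (w / v)); [field; exact Hv|]. f_equal.
  apply injective_projections; [|reflexivity]. simpl.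
  destruct v as [a b], w as [c d]. unfold Re, Cconj, Cmult in Hre. simpl in Hre.
  unfold Cdiv, Cinv, Cmult. simpl. unfold Rdiv.
  transitivity ((a * c - b * - d) * / (a * (a * 1) + b * (b * 1)))%R; [ring|].
  rewrite Hre. ring.
Qed.

Lemma R_indep_mul (z w : C) : z <> 0 -> Im w <> 0%R -> R_indep z (z * w).
Proof.
  intros Hz Hw a b H.
  assert (E : RtoC a + RtoC b * w = 0).
  { replace (RtoC a + RtoC b * w) with (/ z * (RtoC a * z + RtoC b * (z * w))) by (field; exact Hz).
    rewrite H. ring. }
  destruct w as [c d]. simpl in Hw.
  unfold RtoC, Cmult, Cplus in E. simpl in E. injection E as Ea Eb.
  assert (Hb : (b * d = 0)%R) by lra.
  apply Rmult_integral in Hb. destruct Hb as [Hb | Hd]; [|contradiction].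
  split; [|exact Hb]. subst b. lra.
Qed.

Lemma Q_indep_of_R_indep (x y : C) : R_indep x y -> Q_indep x y.
Proof. intros H a b. exact (H (Q2R a) (Q2R b)). Qed.

Lemma Q_indep_neq_0_l (x y : C) : Q_indep x y -> x <> 0.
Proof.
  intros H ->. destruct (H 1%Q 0%Q) as [E _].
  - unfold Qscal. rewrite RMicromega.Q2R_0. ring.
  - rewrite RMicromega.Q2R_1 in E. lra.
Qed.

Lemma Q_indep_spans (V : C -> Prop) (v w : C) :
  is_space V -> V v -> V w -> Q_indep v w ->
  forall z, V z -> exists p q : Q, z = Qscal p v + Qscal q w.
Proof.
  intros HV Vv Vw Hind.
  destruct HV as (_ & _ & _ & (u0 & w0 & _ & _ & _ & Hbasis) & _).
  destruct (Hbasis v Vv) as [p1 [q1 Ev]].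
  destruct (Hbasis w Vw) as [p2 [q2 Ew]].
  subst v w. unfold Qscal in *.
  (* the determinant of (v, w) in the basis (u0, w0); the coefficients below are Cramer's rule *)
  set (D := (p1 * q2 - p2 * q1)%Q).
  assert (HD : ~ (D == 0)%Q).
  { intro HD. apply (Q_indep_neq_0_l _ _ Hind).
    apply Qeq_eqR in HD. unfold D in HD.
    rewrite Q2R_minus, !Q2R_mult, RMicromega.Q2R_0 in HD.
    destruct (Hind q2 (- q1)%Q) as [Hq2 Hq1].
    { unfold Qscal. rewrite Q2R_opp. destruct u0 as [a b], w0.
      apply injective_projections; simpl.
      - transitivity (a * (Q2R p1 * Q2R q2 - Q2R p2 * Q2R q1))%R; [ring | rewrite HD; ring].
      - transitivity (b * (Q2R p1 * Q2R q2 - Q2R p2 * Q2R q1))%R; [ring | rewrite HD; ring]. }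
    destruct (Hind p2 (- p1)%Q) as [Hp2 Hp1].
    { unfold Qscal. rewrite Q2R_opp. destruct u0, w0 as [c d].
      apply injective_projections; simpl.
      - transitivity (- c * (Q2R p1 * Q2R q2 - Q2R p2 * Q2R q1))%R; [ring | rewrite HD; ring].
      - transitivity (- d * (Q2R p1 * Q2R q2 - Q2R p2 * Q2R q1))%R; [ring | rewrite HD; ring]. }
    rewrite Q2R_opp in Hq1, Hp1.
    replace (Q2R p1) with 0%R by lra. replace (Q2R q1) with 0%R by lra. ring. }
  intros z Vz. destruct (Hbasis z Vz) as [p3 [q3 ->]]. unfold Qscal.
  exists ((p3 * q2 - q3 * p2) / D)%Q, ((p1 * q3 - q1 * p3) / D)%Q.
  assert (HDR : Q2R D <> 0%R)
    by (intro E; apply HD, eqR_Qeq; rewrite E, RMicromega.Q2R_0; reflexivity).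
  rewrite !Q2R_div by exact HD. unfold D in *.
  rewrite !Q2R_minus, !Q2R_mult in *.
  destruct u0, w0. apply injective_projections; simpl; field; exact HDR.
Qed.

Lemma homothetic_Qspan_1_of_mem (V : C -> Prop) (lam t : C) :
  is_space V -> lam <> 0 -> Im t <> 0%R -> V lam -> V (lam * t) ->
  homothetic (Qspan 1 t) V.
Proof.
  intros HV Hlam Ht Vlam Vlamt.
  assert (Hspan := Q_indep_spans V _ _ HV Vlam Vlamt
                     (Q_indep_of_R_indep _ _ (R_indep_mul _ _ Hlam Ht))).
  destruct HV as (_ & Vadd & Vscal & _).
  exists lam. split; [exact Hlam|]. intro z. split.
  - intro Vz. destruct (Hspan z Vz) as [p [q ->]].
    exists (Qscal p 1 + Qscal q t). split; [now exists p, q | unfold Qscal; ring].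
  - intros [y [[p [q ->]] ->]].
    replace (lam * (Qscal p 1 + Qscal q t)) with (Qscal p lam + Qscal q (lam * t))
      by (unfold Qscal; ring).
    apply Vadd; apply Vscal; assumption.
Qed.

Lemma R_indep_neq_0_l (x y : C) : R_indep x y -> x <> 0.
Proof. intros H ->. destruct (H 1%R 0%R) as [E _]; [ring | lra]. Qed.

Lemma Qspan_1_real (t y : C) : Im t = 0%R -> Qspan 1 t y -> exists r : R, y = RtoC r.
Proof.
  intros Ht [p [q ->]]. exists (Q2R p + Q2R q * Re t)%R.
  destruct t as [a b]. simpl in Ht. subst b.
  unfold Qscal. apply injective_projections; simpl; ring.
Qed.

Lemma homothetic_Qspan_1_nonreal (V : C -> Prop) (t : C) :
  is_space V -> homothetic (Qspan 1 t) V -> Im t <> 0%R.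
Proof.
  intros HV [lam [_ HV_lam]] Ht.
  destruct HV as [_ [_ [_ [_ [x [y [Vx [Vy Hind]]]]]]]].
  destruct (proj1 (HV_lam x) Vx) as [x' [Hx' ->]].
  destruct (proj1 (HV_lam y) Vy) as [y' [Hy' ->]].
  destruct (Qspan_1_real t x' Ht Hx') as [r1 ->].
  destruct (Qspan_1_real t y' Ht Hy') as [r2 ->].
  apply (R_indep_neq_0_l _ _ Hind).
  destruct (Hind r2 (- r1)%R) as [_ Hr1].
  - rewrite RtoC_opp. ring.
  - replace r1 with 0%R by lra. ring.
Qed.

Lemma homothetic_Qspan_1_mem (V : C -> Prop) (lam t : C) (p q : Z) :
  (forall z, V z <-> exists y, Qspan 1 t y /\ z = lam * y) ->
  V (lam * (RtoC (IZR p) + RtoC (IZR q) * t)).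
Proof.
  intros HV_lam. apply HV_lam.
  exists (Qscal (inject_Z p) 1 + Qscal (inject_Z q) t).
  split; [now exists (inject_Z p), (inject_Z q)|].
  unfold Qscal, Q2R. simpl. rewrite Rinv_1, !Rmult_1_r. ring.
Qed.

(* A pair (s, x) stands for the vector λ s e^{ix}; the four vectors are λ, λτ, λ(1+τ)
   and λ(1-τ) for τ = e^{2ih}. *)
Definition frame_points (h : R) : list (R * R) :=
  [(1, 0); (1, 2 * h); (2 * cos h, h); (2 * sin h, h - PI / 2)]%R.

Lemma frame_points_pairs (h : R) : sin (2 * h) <> 0%R ->
  ForallOrdPairs (fun p p' => sin (snd p' - snd p) <> 0%R) (frame_points h).
Proof.
  intros Hsin2. rewrite sin_2a in Hsin2.
  assert (Hsin : sin h <> 0%R) by (intro E; apply Hsin2; rewrite E; ring).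
  assert (Hcos : cos h <> 0%R) by (intro E; apply Hsin2; rewrite E; ring).
  repeat constructor; cbn [fst snd]; intro E.
  - rewrite Rminus_0_r, sin_2a in E. contradiction.
  - rewrite Rminus_0_r in E. contradiction.
  - rewrite Rminus_0_r, sin_minus, sin_PI2, cos_PI2 in E. lra.
  - replace (h - 2 * h)%R with (- h)%R in E by ring. rewrite sin_neg in E. lra.
  - replace (h - PI / 2 - 2 * h)%R with (- (h + PI / 2))%R in E by ring.
    rewrite sin_neg, sin_plus, sin_PI2, cos_PI2 in E. lra.
  - replace (h - PI / 2 - h)%R with (- (PI / 2))%R in E by ring.
    rewrite sin_neg, sin_PI2 in E. lra.
Qed.

Lemma frame_points_mem (V : C -> Prop) (lam : C) (h : R) :
  is_Qpi h -> sin (2 * h) <> 0%R ->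
  (forall z, V z <-> exists y, Qspan 1 (cis (2 * h)) y /\ z = lam * y) ->
  forall p, In p (frame_points h) ->
    V (lam * (RtoC (fst p) * cis (snd p))) /\ fst p <> 0%R /\ is_Qpi (snd p).
Proof.
  intros Hh Hsin2 HV_lam. rewrite sin_2a in Hsin2.
  assert (Hmem : forall (p q : Z) w,
            lam * (RtoC (IZR p) + RtoC (IZR q) * cis (2 * h)) = w -> V w).
  { intros p q w <-. exact (homothetic_Qspan_1_mem V lam _ p q HV_lam). }
  intros p Hp.
  destruct Hp as [<- | [<- | [<- | [<- | []]]]]; cbn [fst snd]; split; try split.
  - apply (Hmem 1%Z 0%Z). rewrite cis_0. ring.
  - lra.
  - exact is_Qpi_0.
  - apply (Hmem 0%Z 1%Z). ring.
  - lra.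
  - replace (2 * h)%R with (h + h)%R by ring. exact (is_Qpi_add h h Hh Hh).
  - apply (Hmem 1%Z 1%Z). f_equal. unfold cis. rewrite cos_2a_cos, sin_2a.
    apply injective_projections; simpl; ring.
  - intro E. apply Hsin2. replace (cos h) with 0%R by lra. ring.
  - exact Hh.
  - apply (Hmem 1%Z (-1)%Z). f_equal. unfold cis.
    rewrite cos_2a_sin, sin_2a, cos_minus, sin_minus, cos_PI2, sin_PI2.
    apply injective_projections; simpl; ring.
  - intro E. apply Hsin2. replace (sin h) with 0%R by lra. ring.
  - exact (is_Qpi_sub _ _ Hh is_Qpi_PI2).
Qed.

Lemma rational_tuples_of_root_of_unity (V : C -> Prop) (t : C) :
  is_space V -> root_of_unity t -> homothetic (Qspan 1 t) V ->
  (exists l, rational_tuple V 3 l /\ has_perpendicular l) /\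
  (exists l, rational_tuple V 4 l /\ has_perpendicular l).
Proof.
  intros HV Hroot Hhom.
  assert (Him := homothetic_Qspan_1_nonreal V t HV Hhom).
  destruct Hhom as [lam [Hlam HV_lam]].
  destruct (root_of_unity_is_cis t Hroot) as [x [Hx ->]].
  assert (Hh := is_Qpi_half x Hx).
  replace x with (2 * (x / 2))%R in Him, HV_lam by field.
  set (h := (x / 2)%R) in *.
  assert (Hpts := frame_points_mem V lam h Hh Him HV_lam).
  assert (Hpairs := frame_points_pairs h Him).
  assert (Hperp : cos (h - (h - PI / 2)) = 0%R)
    by (replace (h - (h - PI / 2))%R with (PI / 2)%R by ring; exact cos_PI2).
  split.
  - assert (Hpts3 : forall p, In p (tl (frame_points h)) ->
      V (lam * (RtoC (fst p) * cis (snd p))) /\ fst p <> 0%R /\ is_Qpi (snd p))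
      by (intros p Hp; apply Hpts; right; exact Hp).
    assert (Hpairs3 : ForallOrdPairs (fun p p' => sin (snd p' - snd p) <> 0%R)
                        (tl (frame_points h))) by (inversion Hpairs; assumption).
    eexists. split; [exact (rational_tuple_cis V lam _ Hlam Hpts3 Hpairs3)|].
    exists 1%nat, 2%nat. cbn. repeat split; try lia.
    exact (Re_mul_Cconj_cis _ _ _ _ _ Hperp).
  - eexists. split; [exact (rational_tuple_cis V lam _ Hlam Hpts Hpairs)|].
    exists 2%nat, 3%nat. cbn. repeat split; try lia.
    exact (Re_mul_Cconj_cis _ _ _ _ _ Hperp).
Qed.

Lemma reflection_mem (V : C -> Prop) (v u : C) (t : R) :
  is_space V -> V v -> V (v * (0%R, t)) -> v <> 0 -> t <> 0%R -> V u ->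
  V (v * Cconj (u / v)).
Proof.
  intros HV Vv Vw Hv Ht Vu.
  assert (Hindep := Q_indep_of_R_indep _ _ (R_indep_mul v (0%R, t) Hv Ht)).
  destruct (Q_indep_spans V _ _ HV Vv Vw Hindep u Vu) as [a [b ->]].
  assert (Hratio : (Qscal a v + Qscal b (v * (0%R, t))) / v = (Q2R a, (Q2R b * t)%R)).
  { transitivity (RtoC (Q2R a) + RtoC (Q2R b) * (0%R, t)); [unfold Qscal; field; exact Hv|].
    apply injective_projections; simpl; ring. }
  replace (v * Cconj _) with (Qscal a v + Qscal (- b) (v * (0%R, t))).
  - destruct HV as (_ & Vadd & Vscal & _). apply Vadd; apply Vscal; assumption.
  - rewrite Hratio. unfold Qscal, Cconj. rewrite Q2R_opp.
    destruct v. apply injective_projections; simpl; ring.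
Qed.

Lemma root_of_unity_of_perpendicular (V : C -> Prop) (v w u : C) :
  is_space V -> V v -> V w -> V u -> v <> 0 -> w <> 0 -> Re (v * Cconj w) = 0%R ->
  ~ same_line v u -> ~ same_line w u -> rational_angle v u ->
  exists t : C, root_of_unity t /\ homothetic (Qspan 1 t) V.
Proof.
  intros HV Vv Vw Vu Hv Hw Hperp Hvu Hwu [q [rho [Hrho Hangle]]].
  destruct (perp_imaginary_ratio v w Hv Hperp) as [t ->].
  assert (Ht : t <> 0%R) by (intro E; apply Hw; rewrite E; apply Cmult_0_r).
  set (phi := (Q2R q * PI)%R) in *.
  assert (Hratio : u / v = RtoC rho * cis phi)
    by (rewrite Hangle; unfold cis, RtoC, Cmult; simpl; f_equal; ring).
  assert (Hu : u = v * (RtoC rho * cis phi)) by (rewrite <- Hratio; field; exact Hv).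
  assert (Hsin : sin phi <> 0%R).
  { intro E. apply Hvu. exists (rho * cos phi)%R. rewrite Hu. unfold cis. rewrite E.
    destruct v. apply injective_projections; simpl; ring. }
  assert (Hcos : cos phi <> 0%R).
  { intro E. apply Hwu. exists (rho * sin phi / t)%R. rewrite Hu. unfold cis. rewrite E.
    destruct v. apply injective_projections; simpl; field; exact Ht. }
  set (lam := v * Cconj (u / v)).
  assert (Vlam : V lam) by exact (reflection_mem V v u t HV Vv Vw Hv Ht Vu).
  assert (Hlam : lam = v * (RtoC rho * cis (- phi))).
  { unfold lam. rewrite Hratio. f_equal. unfold cis, RtoC, Cmult, Cconj. simpl.
    rewrite cos_neg, sin_neg. f_equal; ring. }
  exists (cis (phi + phi)). split.
  - apply root_of_unity_cis, is_Qpi_add; exists q; reflexivity.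
  - apply (homothetic_Qspan_1_of_mem V lam _ HV).
    + rewrite Hlam. apply scaled_cis_neq_0; [exact Hv | lra].
    + unfold cis. simpl. rewrite sin_plus. intro E.
      assert (Hprod : (sin phi * cos phi = 0)%R) by lra.
      apply Rmult_integral in Hprod. tauto.
    + exact Vlam.
    + rewrite Hlam, <- !Cmult_assoc, cis_add.
      replace (- phi + (phi + phi))%R with phi by ring.
      rewrite <- Hu. exact Vu.
Qed.

Lemma root_of_unity_of_rational_tuple (V : C -> Prop) (n : nat) (l : list C) :
  is_space V -> (3 <= n)%nat -> rational_tuple V n l -> has_perpendicular l ->
  exists t : C, root_of_unity t /\ homothetic (Qspan 1 t) V.
Proof.
  intros HV Hn [Hlen [Hmem Hpairs]] [i [j [Hi [Hj [Hij Hperp]]]]].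
  rewrite Hlen in Hi, Hj.
  assert (Hk : exists k, (k < 3)%nat /\ k <> i /\ k <> j).
  { destruct (Nat.eq_dec i 0), (Nat.eq_dec j 0).
    - lia.
    - destruct (Nat.eq_dec j 1); [exists 2%nat | exists 1%nat]; lia.
    - destruct (Nat.eq_dec i 1); [exists 2%nat | exists 1%nat]; lia.
    - exists 0%nat; lia. }
  destruct Hk as [k [Hk3 [Hki Hkj]]].
  assert (Hk : (k < n)%nat) by lia.
  destruct (Hmem i Hi) as [Vv Hv], (Hmem j Hj) as [Vw Hw], (Hmem k Hk) as [Vu _].
  destruct (Hpairs i k Hi Hk ltac:(lia)) as [Hvu Hangle].
  destruct (Hpairs j k Hj Hk ltac:(lia)) as [Hwu _].
  exact (root_of_unity_of_perpendicular V _ _ _ HV Vv Vw Vu Hv Hw Hperp Hvu Hwu Hangle).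
Qed.

Theorem lemma7p1 (V : C -> Prop) (HV : is_space V) :
  ((exists t : C, root_of_unity t /\ homothetic (Qspan 1 t) V) <->
   (exists l : list C, rational_tuple V 3 l /\ has_perpendicular l)) /\
  ((exists l : list C, rational_tuple V 3 l /\ has_perpendicular l) <->
   (exists l : list C, rational_tuple V 4 l /\ has_perpendicular l)).
Proof.
  assert (Htuples : forall n l, (3 <= n)%nat -> rational_tuple V n l -> has_perpendicular l ->
            (exists l, rational_tuple V 3 l /\ has_perpendicular l) /\
            (exists l, rational_tuple V 4 l /\ has_perpendicular l)).
  { intros n l Hn Hl Hperp.
    destruct (root_of_unity_of_rational_tuple V n l HV Hn Hl Hperp) as [t [Hroot Hhom]].
    exact (rational_tuples_of_root_of_unity V t HV Hroot Hhom). }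
  split; split.
  - intros [t [Hroot Hhom]]. exact (proj1 (rational_tuples_of_root_of_unity V t HV Hroot Hhom)).
  - intros [l [Hl Hperp]]. exact (root_of_unity_of_rational_tuple V 3 l HV (le_n 3) Hl Hperp).
  - intros [l [Hl Hperp]]. exact (proj2 (Htuples 3%nat l (le_n 3) Hl Hperp)).
  - intros [l [Hl Hperp]]. exact (proj1 (Htuples 4%nat l (le_S _ _ (le_n 3)) Hl Hperp)).
Qed.
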